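(* Let $f$ be a multiplicative function with $f(n)=o(n^\delta)$ for some $\delta>0$, and let $\sigma>\delta$. Then for all but finitely many primes $p$, the series $\sum_{n=0}^\infty\frac{|D_f(n,p)|}{p^{n\sigma}}$ is convergent, and these sums are bounded uniformly in $p$.
   Context: For a prime $p$ and integer $k\ge1$, $D_f(k,p)$ is the determinant of the $k\times k$ matrix $(a_{ij})$ with $a_{ij}=f(p^{i-j+1})$ if $i-j+1\ge0$ and $a_{ij}=0$ otherwise; $D_f(0,p)=1$. *)

From mathcomp Require Import all_boot all_order all_algebra.
From mathcomp Require Import all_classical all_reals all_analysis.
From mathcomp Require Import complex.
Set Implicit Arguments. Unset Strict Implicit. Unset Printing Implicit Defensive.
Import Order.TTheory GRing.Theory Num.Theory.
Local Open Scope ring_scope.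

Definition cmod (R : realType) (z : R[i]) : R := ComplexField.Normc.normc z.

Definition arith_multiplicative (R : realType) (f : nat -> R[i]) : Prop :=
  f 1%N = 1 /\ forall m n : nat, coprime m n -> f (m * n)%N = f m * f n.

Definition little_o_pow (R : realType) (f : nat -> R[i]) (delta : R) : Prop :=
  forall eps : R, 0 < eps ->
    exists N : nat, forall n : nat, (N <= n)%N ->
      cmod (f n) <= eps * (n%:R `^ delta).

(* The k x k matrix (a_ij), a_ij = f(p^(i-j+1)) if i-j+1 >= 0, else 0.
   With 0-based indices i j : 'I_k the condition i-j+1 >= 0 is j <= i+1. *)
Definition Dmat (R : realType) (f : nat -> R[i]) (k p : nat) : 'M[R[i]]_k :=
  \matrix_(i < k, j < k) (if (j <= i.+1)%N then f (p ^ (i.+1 - j))%N else 0).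

(* D_f(k,p); for k = 0 this is the determinant of the empty matrix, i.e. 1. *)
Definition D_f (R : realType) (f : nat -> R[i]) (k p : nat) : R[i] :=
  \det (Dmat f k p).

Definition Dterm (R : realType) (f : nat -> R[i]) (sigma : R) (p n : nat) : R :=
  cmod (D_f f n p) / (p%:R `^ (n%:R * sigma)).

Set Warnings "-notation-overridden,-ambiguous-paths,-notation-incompatible-prefix".
From mathcomp Require Import all_boot all_order all_algebra.
From mathcomp Require Import all_classical all_reals all_analysis.
From mathcomp Require Import complex.
From mathcomp Require Import ring.
Import Order.TTheory GRing.Theory Num.Theory numFieldTopology.Exports numFieldNormedType.Exports.
Set Implicit Arguments. Unset Strict Implicit. Unset Printing Implicit Defensive.
Local Open Scope ring_scope.

(* The matrix defining [D_f(n,p)] is lower Hessenberg with superdiagonal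
   [f(1) = 1], so expanding along its first row bounds [|D_f(n,p)|] by
   [(2 q)^n] as soon as [|f(p^m)| <= q^m] for all [m].  For [p] beyond the
   threshold of [f(n) = o(n^delta)] one may take [q = p^delta], and for [p]
   large also [p^(sigma - delta) >= 4]; then the [n]-th term of the series is
   at most [2^-n], uniformly in [p]. *)

Section HessenbergDeterminant.
Variable T : comPzRingType.

(* Expanding along the first row replaces the first column by a shifted one,
   so the first column [c] is kept independent of the Toeplitz part [g]. *)
Definition hessenberg_mx (g c : nat -> T) k : 'M[T]_k :=
  \matrix_(i < k, j < k) (if j == 0%N :> nat then c i
     else if (j <= i.+1)%N then g (i.+1 - j)%N else 0).

Lemma hessenberg_minor00 g c k :
  row' ord0 (col' ord0 (hessenberg_mx g c k.+1)) =
  hessenberg_mx g (fun i => g i.+1) k.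
Proof. by apply/matrixP => i j; rewrite !mxE /=; case: eqP => [->|]. Qed.

Lemma hessenberg_minor01 g c k :
  row' ord0 (col' (lift ord0 ord0) (hessenberg_mx g c k.+2)) =
  hessenberg_mx g (fun i => c i.+1) k.+1.
Proof. by apply/matrixP => i [[|j] lt_j] //; rewrite !mxE. Qed.

Lemma det_hessenberg1 g c : \det (hessenberg_mx g c 1) = c 0%N.
Proof. by rewrite det_mx11 mxE. Qed.

Lemma det_hessenbergSS g c k :
  \det (hessenberg_mx g c k.+2) =
    c 0%N * \det (hessenberg_mx g (fun i => g i.+1) k.+1)
  - g 0%N * \det (hessenberg_mx g (fun i => c i.+1) k.+1).
Proof.
rewrite (expand_det_row _ ord0) 2!big_ord_recl big1 ?addr0; last first.
  by move=> j _; rewrite mxE mul0r.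
rewrite /cofactor hessenberg_minor00 hessenberg_minor01 !mxE /=.
by rewrite expr0 expr1 mul1r mulN1r mulrN.
Qed.

End HessenbergDeterminant.

Lemma Dmat_hessenberg (R : realType) (f : nat -> R[i]) k p :
  Dmat f k p = hessenberg_mx (fun m => f (p ^ m)%N) (fun i => f (p ^ i.+1)%N) k.
Proof. by apply/matrixP => i j; rewrite !mxE; case: eqP => // ->; rewrite subn0. Qed.

Section ModulusBounds.
Variable R : realType.
Implicit Types x y : R[i].

Lemma cmodM x y : cmod (x * y) = cmod x * cmod y.
Proof. exact: ComplexField.Normc.normcM. Qed.

Lemma cmodD x y : cmod (x + y) <= cmod x + cmod y.
Proof. exact: le_normcD. Qed.

Lemma cmodN x : cmod (- x) = cmod x.
Proof. exact: normcN. Qed.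

Lemma cmod1 : cmod (1 : R[i]) = 1.
Proof. exact: ComplexField.Normc.normc1. Qed.

Lemma cmod_ge0 x : 0 <= cmod x.
Proof. by case: x => a b; rewrite /cmod /= sqrtr_ge0. Qed.

(* The factor [a] is needed for the (0,1)-minor, whose first column is [c]
   shifted by one and hence bounded with [a * q] in place of [a]. *)
Lemma cmod_det_hessenberg_le (g : nat -> R[i]) (q : R) : 1 <= q ->
  (forall m, cmod (g m) <= q ^+ m) ->
  forall k (a : R) (c : nat -> R[i]), 1 <= a ->
  (forall i, cmod (c i) <= a * q ^+ i.+1) ->
  cmod (\det (hessenberg_mx g c k)) <= a * (2 * q) ^+ k.
Proof.
move=> q_ge1 g_le; have q_ge0 : 0 <= q by exact: le_trans q_ge1.
elim=> [|k IH] a c a_ge1 c_le; first by rewrite det_mx00 cmod1 mulr1.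
have a_ge0 : 0 <= a by exact: le_trans a_ge1.
case: k IH => [|k] IH.
  rewrite det_hessenberg1 (le_trans (c_le 0%N)) // !expr1 ler_wpM2l //.
  by rewrite ler_peMl // ler1n.
rewrite det_hessenbergSS (le_trans (cmodD _ _)) // cmodN !cmodM.
have first_le : cmod (c 0%N) *
    cmod (\det (hessenberg_mx g (fun i => g i.+1) k.+1))
  <= a * q * (2 * q) ^+ k.+1.
  apply: ler_pM (cmod_ge0 _) (cmod_ge0 _) _ _.
    by have := c_le 0%N; rewrite expr1.
  rewrite -[X in _ <= X]mul1r; apply: IH => // i; rewrite mul1r; exact: g_le.
have second_le : cmod (g 0%N) *
    cmod (\det (hessenberg_mx g (fun i => c i.+1) k.+1))
  <= 1 * (a * q * (2 * q) ^+ k.+1).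
  apply: ler_pM (cmod_ge0 _) (cmod_ge0 _) _ _.
    by have := g_le 0%N; rewrite expr0.
  apply: IH; first by rewrite -[1]mulr1 ler_pM.
  by move=> i; rewrite -mulrA -exprS c_le.
apply: le_trans (lerD first_le second_le) _.
by rewrite mul1r le_eqVlt; apply/orP; left; apply/eqP; rewrite !exprS; ring.
Qed.

End ModulusBounds.

Lemma natr_powR_ge_eventually (R : realType) (r b : R) : 0 < r -> 0 <= b ->
  exists K : nat, forall p : nat, (K <= p)%N -> b <= p%:R `^ r.
Proof.
move=> r_gt0 b_ge0; exists (Num.truncn (b `^ r^-1)).+1 => p K_le_p.
have root_le_p : b `^ r^-1 <= p%:R.
  apply/ltW/(lt_le_trans (real_truncnS_gt (num_real _))).
  by rewrite ler_nat.
have root_powR : (b `^ r^-1) `^ r = b.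
  by rewrite -powRrM mulVf ?lt0r_neq0 ?powRr1.
rewrite -root_powR.
by apply: (ge0_ler_powR (ltW r_gt0)); rewrite ?nnegrE ?powR_ge0 ?ler0n.
Qed.

Lemma series_le_pow (R : realType) (u : R ^nat) (z : R) : 0 <= z -> z < 1 ->
  (forall n, 0 <= u n) -> (forall n, u n <= z ^+ n) ->
  cvgn (series u) /\ limn (series u) <= (1 - z)^-1.
Proof.
move=> z_ge0 z_lt1 u_ge0 u_le.
have z_norm : `|z| < 1 by rewrite ger0_norm.
have u_le_geo n : u n <= geometric 1 z n by rewrite /geometric /= mul1r.
have geo_ge0 n : 0 <= geometric 1 z n by rewrite /geometric /= mul1r exprn_ge0.
have geo_cvg := is_cvg_geometric_series (a := 1) z_norm.
have u_cvg := series_le_cvg u_ge0 geo_ge0 u_le_geo geo_cvg.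
split=> //; apply: le_trans (lim_series_le u_cvg geo_cvg u_le_geo) _.
by rewrite (cvg_lim _ (cvg_geometric_series (a := 1) z_norm)) // div1r.
Qed.

Section PrimePowerBounds.
Variables (R : realType) (f : nat -> R[i]).

Lemma cmod_f_expn_le (delta : R) (N p : nat) : f 1%N = 1 ->
  (0 < p)%N -> (N <= p)%N -> (forall n, (N <= n)%N -> cmod (f n) <= n%:R `^ delta) ->
  forall m, cmod (f (p ^ m)%N) <= (p%:R `^ delta) ^+ m.
Proof.
move=> f1 p_gt0 N_le_p f_le [|m]; first by rewrite expn0 f1 expr0 cmod1.
have N_le_pm : (N <= p ^ m.+1)%N.
  by rewrite (leq_trans N_le_p) // expnS leq_pmulr // expn_gt0 p_gt0.
apply: le_trans (f_le _ N_le_pm) _.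
by rewrite natrX -powR_mulrn ?ler0n // powRAC powR_mulrn ?powR_ge0.
Qed.

Lemma cmod_D_f_le (q : R) (p : nat) : 1 <= q ->
  (forall m, cmod (f (p ^ m)%N) <= q ^+ m) ->
  forall n, cmod (D_f f n p) <= (2 * q) ^+ n.
Proof.
move=> q_ge1 f_le n; rewrite /D_f Dmat_hessenberg -[X in _ <= X]mul1r.
by apply: cmod_det_hessenberg_le => // i; rewrite mul1r.
Qed.

Lemma Dterm_ge0 (sigma : R) (p n : nat) : 0 <= Dterm f sigma p n.
Proof. by rewrite /Dterm divr_ge0 ?powR_ge0 ?cmod_ge0. Qed.

(* The denominator [p^(n sigma)] splits as [(q s)^n] with [q = p^delta]
   absorbing the growth of [D_f] and [s = p^(sigma - delta) >= 4]. *)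
Lemma Dterm_le_half_pow (delta sigma : R) (p : nat) : (0 < p)%N -> 0 <= delta ->
  (forall m, cmod (f (p ^ m)%N) <= (p%:R `^ delta) ^+ m) ->
  4 <= p%:R `^ (sigma - delta) ->
  forall n, Dterm f sigma p n <= 2^-1 ^+ n.
Proof.
move=> p_gt0 delta_ge0 f_le s_ge4 n.
set q := p%:R `^ delta; set s := p%:R `^ (sigma - delta).
have q_ge1 : 1 <= q.
  have := ge0_ler_powR delta_ge0 (ler01 : 0 <= (1 : R)) (ler0n _ p).
  by rewrite powR1 ler1n => ->.
have q_gt0 : 0 < q by exact: lt_le_trans q_ge1.
have s_gt0 : 0 < s by exact: lt_le_trans s_ge4.
have [q_ge0 s_ge0] := (ltW q_gt0, ltW s_gt0).
have denomE : p%:R `^ (n%:R * sigma) = (q * s) ^+ n.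
  rewrite mulrC powRrM powR_mulrn ?powR_ge0 // -powRD; first by rewrite addrC subrK.
  by apply/implyP => _; rewrite pnatr_eq0 -lt0n.
rewrite /Dterm denomE ler_pdivrMr ?exprn_gt0 ?mulr_gt0 //.
apply: le_trans (cmod_D_f_le q_ge1 f_le n) _; rewrite -exprMn.
apply: lerXn2r; rewrite ?nnegrE ?mulr_ge0 ?invr_ge0 //.
have -> : 2 * q = 2^-1 * (q * 4) by field.
by rewrite ler_wpM2l ?invr_ge0 // ler_wpM2l.
Qed.

End PrimePowerBounds.

Theorem lemma5 (R : realType) (f : nat -> R[i]) (delta sigma : R) :
  arith_multiplicative f -> 0 < delta -> little_o_pow f delta -> delta < sigma ->
  exists P0 : nat,
    (forall p : nat, prime p -> (P0 <= p)%N ->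
       cvgn (series (Dterm f sigma p))) /\
    (exists M : R, forall p : nat, prime p -> (P0 <= p)%N ->
       limn (series (Dterm f sigma p)) <= M).
Proof.
move=> [f1 _] delta_gt0 f_small delta_lt_sigma.
have [N f_le] := f_small 1 ltr01.
have [K s_ge4] : exists K : nat,
    forall p : nat, (K <= p)%N -> 4 <= p%:R `^ (sigma - delta).
  by apply: natr_powR_ge_eventually; rewrite ?subr_gt0 ?ler0n.
have half_ge0 : 0 <= 2^-1 :> R by rewrite invr_ge0 ler0n.
have half_lt1 : 2^-1 < 1 :> R by rewrite invf_lt1 ?ltr0n // ltr1n.
have series_Dterm p : prime p -> (maxn N K <= p)%N ->
    cvgn (series (Dterm f sigma p)) /\
    limn (series (Dterm f sigma p)) <= (1 - 2^-1)^-1.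
  move=> /prime_gt0 p_gt0; rewrite geq_max => /andP[N_le_p K_le_p].
  apply: series_le_pow half_ge0 half_lt1 (Dterm_ge0 f sigma p) _.
  apply: (Dterm_le_half_pow p_gt0 (ltW delta_gt0) _ (s_ge4 p K_le_p)).
  by apply: (cmod_f_expn_le f1 p_gt0 N_le_p) => n /f_le; rewrite mul1r.
exists (maxn N K); split=> [p p_prime p_large|].
  by have [] := series_Dterm p p_prime p_large.
by exists (1 - 2^-1)^-1 => p p_prime p_large; have [] := series_Dterm p p_prime p_large.
Qed.
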